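(* Let $k$ be a field of characteristic $p>0$, $P$ a finite poset, $R=\mathcal{R}_k[J(P)]$ the Hibi ring and $\mathfrak{m}=R_+$. Then \[ \liminf_{e\to\infty}\frac{\nu(p^e)}{p^e}\ \ge\ \operatorname{rank}^*P+2, \] where $\nu(p^e)=\max\{r\in\mathbb{N}\mid\mathfrak{m}^r\not\subseteq\mathfrak{m}^{[p^e]}\}$.
   Context: Let $P=\{p_1,\dots,p_N\}$ be a finite poset and $J(P)$ the set of poset ideals of $P$ (down-closed subsets, including $\emptyset$ and $P$). The Hibi ring is $\mathcal{R}_k[J(P)]=k[\,T\prod_{p_i\in I}X_i\mid I\in J(P)\,]\subseteq k[T,X_1,\dots,X_N]$, each generator in degree $1$; $\mathfrak{m}=R_+$ is generated by these generators; $\mathfrak{m}^{[q]}=(x^q\mid x\in\mathfrak{m})$. $x\lessdot y$ means $x<y$ with no $z$ satisfying $x<z<y$. A path is a sequence $C=(q_1,\dots,q_t)$ of distinct elements of $P$ with $q_1$ minimal in $P$, consecutive elements related by $q_i\lessdot q_{i+1}$ or $q_{i+1}\lessdot q_i$, and $q_{t-1}\lessdot q_t$ (when $t\ge2$); it is maximal if $q_t$ is maximal in $P$. For $1<i<t$, $q_i$ is locally maximal if $q_{i-1}\lessdot q_i$ and $q_{i+1}\lessdot q_i$, locally minimal if $q_i\lessdot q_{i-1}$ and $q_i\lessdot q_{i+1}$; $q_1$ counts as locally minimal and $q_t$ as locally maximal. The decomposition $C=A_1+D_1+\cdots+D_{n-1}+A_n$ splits $C$ into consecutive blocks: $A_1$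 is $q_1$ through the first locally maximal element, $D_1$ the following elements through the next locally minimal element, $A_2$ the following elements through the next locally maximal element, etc., $A_n$ ending at $q_t$; $t(A_i)$ is the last element of $A_i$, $V(\cdot)$ the set of elements of a block, $\langle A\rangle=\{q\in P\mid q\le t(A)\}$, and $\langle A_i\setminus t(A_i)\rangle$ the poset ideal generated by the elements of $A_i$ other than $t(A_i)$. $C$ satisfies ( * ) if for all $1\le i\le n-1$: (1) $V(D_i)\cap(\bigcup_{m=1}^{i-1}\langle A_m\rangle\cup\langle A_i\setminus t(A_i)\rangle\cup\{t(A_i)\})=\emptyset$; (2) $V(A_{i+1})\cap\bigcup_{m=1}^{i}\langle A_m\rangle=\emptyset$. $\operatorname{len}^*C=\#\{i\mid q_i\lessdot q_{i+1}\}$, and $\operatorname{rank}^*P$ is the maximum of $\operatorname{len}^*C$ over maximal paths $C$ satisfying ( * ). *)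

From HB Require Import structures.
From mathcomp Require Import all_boot all_order all_algebra.
From mathcomp Require Import mpoly.
From Stdlib Require Import ClassicalEpsilon.

Set Implicit Arguments.
Unset Strict Implicit.
Unset Printing Implicit Defensive.

Import Order.TTheory GRing.Theory.

Section Hibi.

Variable (k : fieldType) (d : Order.disp_t) (P : finPOrderType d).

(* Ambient polynomial ring k[T, X_p (p in P)]: variable 0 is T, variable
   (enum_rank x).+1 is X_x. *)
Definition nvars := #|P|.+1.
Definition Poly := {mpoly k[nvars]}.

Definition varT : Poly := 'X_(ord0 : 'I_nvars).
Definition varX (x : P) : Poly := 'X_(lift ord0 (enum_rank x)).

Definition poset_ideal (I : {set P}) : Prop :=
  forall x y : P, (y <= x)%O -> x \in I -> y \in I.

Definition hibi_gen (I : {set P}) : Poly := (varT * \prod_(x in I) varX x)%R.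

Inductive inHibi : Poly -> Prop :=
  | Hibi_const (c : k) : inHibi (c%:MP)%R
  | Hibi_gen (I : {set P}) : poset_ideal I -> inHibi (hibi_gen I)
  | Hibi_add f g : inHibi f -> inHibi g -> inHibi (f + g)%R
  | Hibi_mul f g : inHibi f -> inHibi g -> inHibi (f * g)%R.

Inductive in_ideal (S : Poly -> Prop) : Poly -> Prop :=
  | Ideal_zero : in_ideal S 0%R
  | Ideal_gen s : S s -> in_ideal S s
  | Ideal_add f g : in_ideal S f -> in_ideal S g -> in_ideal S (f + g)%R
  | Ideal_mul r f : inHibi r -> in_ideal S f -> in_ideal S (r * f)%R.

Definition max_ideal : Poly -> Prop :=
  in_ideal (fun g => exists I, poset_ideal I /\ g = hibi_gen I).

Definition max_ideal_pow (r : nat) : Poly -> Prop :=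
  in_ideal (fun g => exists fs : seq Poly,
     [/\ size fs = r, (forall f, f \in fs -> max_ideal f) & g = \prod_(f <- fs) f]%R).

Definition frob_pow (q : nat) : Poly -> Prop :=
  in_ideal (fun g => exists x, max_ideal x /\ g = (x ^+ q)%R).

Definition subideal (I J : Poly -> Prop) : Prop := forall f, I f -> J f.

Definition nu_pred (q r : nat) : Prop := ~ subideal (max_ideal_pow r) (frob_pow q).

Definition nu (q : nat) : nat :=
  epsilon (inhabits 0%N)
    (fun n => nu_pred q n /\ forall r, nu_pred q r -> (r <= n)%N).

Definition covers (x y : P) : bool :=
  ((x < y)%O && [forall z : P, ~~ ((x < z)%O && (z < y)%O)]).

Definition minimalP (x : P) : bool := [forall y : P, ~~ (y < x)%O].
Definition maximalP (x : P) : bool := [forall y : P, ~~ (x < y)%O].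

Definition is_path (C : seq P) : bool :=
  if C is q1 :: rest then
    [&& uniq C, minimalP q1,
        path (fun x y => covers x y || covers y x) q1 rest
      & last true (pairmap covers q1 rest)]  (* q_{t-1} <. q_t *)
  else false.

Definition is_maximal_path (C : seq P) : bool :=
  if C is q1 :: rest then is_path C && maximalP (last q1 rest) else false.

(* split into maximal runs of up-steps / down-steps:
   the blocks are A_1, D_1, A_2, ..., D_{n-1}, A_n *)
Fixpoint runs (dir : bool) (prev : P) (s : seq P) (cur : seq P) : seq (seq P) :=
  match s with
  | [::] => [:: cur]
  | x :: s' =>
      if covers prev x == dir then runs dir x s' (rcons cur x)
      else cur :: runs (covers prev x) x s' [:: x]
  end.

Definition blocks (C : seq P) : seq (seq P) :=
  if C is q1 :: rest then runs true q1 rest [:: q1] else [::].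

Definition nA (C : seq P) : nat := (size (blocks C)).+1 %/ 2.
(* 0-indexed: A i = A_{i+1}, D i = D_{i+1} *)
Definition blockA (C : seq P) (i : nat) : seq P := nth [::] (blocks C) i.*2.
Definition blockD (C : seq P) (i : nat) : seq P := nth [::] (blocks C) i.*2.+1.

Definition tB (x0 : P) (A : seq P) : P := last x0 A.

Definition genA (x0 : P) (A : seq P) : {set P} := [set q | (q <= tB x0 A)%O].

Definition genA_minus_t (A : seq P) : {set P} :=
  [set q | has (fun a => (q <= a)%O) (take (size A).-1 A)].

Definition star_cond (C : seq P) : bool :=
  if C is q1 :: _ then
    [forall i : 'I_(nA C).-1,
       let V_D := [set x in blockD C i] in
       let V_A' := [set x in blockA C i.+1] in
       let U := \bigcup_(m < i) genA q1 (blockA C m) in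
       [&& V_D :&: (U :|: genA_minus_t (blockA C i)
                      :|: [set tB q1 (blockA C i)]) == set0
         & V_A' :&: (U :|: genA q1 (blockA C i)) == set0]]
  else false.

Definition len_star (C : seq P) : nat :=
  if C is q1 :: rest then count id (pairmap covers q1 rest) else 0.

(* rank^* P : max of len^* over maximal paths satisfying condition star; paths are
   duplicate-free so they have at most #|P| elements. *)
Definition rank_star : nat :=
  \max_(n < #|P|.+1) \max_(t : n.-tuple P | is_maximal_path t && star_cond t)
     len_star t.

End Hibi.

Definition liminf_ge (a : nat -> rat) (c : rat) : Prop :=
  forall eps : rat, (0 < eps)%R ->
    exists E : nat, forall e : nat, (E <= e)%N -> (c - eps <= a e)%R.

(* Write q = p^e and fix a path C satisfying the star condition with
   len^* C = rank^* P.  Since x |-> x^q is additive in characteristic p, every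
   monomial of m^[q] is T^q prod_{x in I} X_x^q (I a poset ideal) times a
   monomial of the Hibi ring, i.e. one whose X_x-exponents are at most its
   T-exponent and decrease along P.  The witness is T^a prod_x X_x^b(x) in m^a,
   with a = (q-1)(len^* C + 2) and b(x) = (q-1)(len^* C + 2 - lambda(x)),
   lambda(x) being the largest level (one plus the number of up-steps so far)
   of an element of C below x.  The star condition forces lambda to be the
   level itself on the ascending blocks of C.  A decomposition as above needs
   q_1 in I and q_t outside I, so C leaves I at some step: at a down-step this
   contradicts that I is an ideal, at an up-step b drops by at most q-1 where
   it would have to drop by q.  Hence nu(q) >= (q-1)(rank^* P + 2); nu(q) is
   indeed a maximum because m^r is in m^[q] for r > 2^|P| (q-1), by
   pigeonhole. *)

From Pilot Require Import Defs.
From HB Require Import structures.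
From mathcomp Require Import all_boot all_order all_algebra mpoly.
From mathcomp Require Import zify lra.
From Stdlib Require Import ClassicalEpsilon.

Set Implicit Arguments.
Unset Strict Implicit.
Unset Printing Implicit Defensive.
Import Order.TTheory GRing.Theory Num.Theory.

Lemma mem_mask_nth (T : eqType) (m : bitseq) (s : seq T) x0 i :
  i < size s -> size m = size s -> nth false m i -> nth x0 s i \in mask m s.
Proof.
elim: s m i => [|x s ih] [|b m] [|i] //= hi [hm]; first by move=> ->; rewrite mem_head.
by move=> hb; case: b; rewrite ?inE ih ?orbT.
Qed.

Lemma mem_take_predsize (T : eqType) (x0 x : T) s :
  x \in s -> x != last x0 s -> x \in take (size s).-1 s.
Proof.
case: s => [//|z s] hx hne.
have -> : take (size (z :: s)).-1 (z :: s) = belast z s.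
  by rewrite lastI size_rcons /= -cats1 take_size_cat.
move: hx hne; rewrite lastI mem_rcons inE last_rcons.
by case/orP => [/eqP->|//]; rewrite eqxx.
Qed.

(** * Blocks of a path *)

Section RunLabels.
Variables (d : Order.disp_t) (P : finPOrderType d).

Lemma covers_lt (x y : P) : covers x y -> (x < y)%O.
Proof. by case/andP. Qed.

Lemma sorted_covers_le_last (x0 : P) (s : seq P) : sorted (@covers d P) s ->
  forall y, y \in s -> (y <= last x0 s)%O.
Proof.
case: s => [//|z s] /=; elim: s z => [|w s ih] z /=.
  by move=> _ y; rewrite inE => /eqP ->.
move=> /andP[hzw hp] y; rewrite inE => /orP[/eqP ->|hy]; last exact: ih.
by apply: le_trans (ltW (covers_lt hzw)) _; apply: ih => //; apply: mem_head.
Qed.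

(* [run_labels dir prev s] labels each element of [s] with the index of the
   block of [runs dir prev s cur] it lands in. *)
Fixpoint run_labels (dir : bool) (prev : P) (s : seq P) : seq nat :=
  match s with
  | [::] => [::]
  | x :: s' => if covers prev x == dir then 0 :: run_labels dir x s'
               else 1 :: map S (run_labels (covers prev x) x s')
  end.

Lemma size_run_labels dir prev s : size (run_labels dir prev s) = size s.
Proof.
elim: s dir prev => [|x s ih] dir prev //=.
by case: ifP => _ /=; rewrite ?size_map ih.
Qed.

Lemma nth_runs dir prev s cur i :
  nth [::] (runs dir prev s cur) i =
  (if i == 0 then cur else [::]) ++ mask [seq l == i | l <- run_labels dir prev s] s.
Proof.
have mask_succ0 (T : Type) (L : seq nat) (s' : seq T) :
    mask [seq l == 0 | l <- map S L] s' = [::].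
  by elim: L s' => [|l L ih] [|x s'] //=.
have map_eq_succ (L : seq nat) j :
    [seq l == j.+1 | l <- map S L] = [seq l == j | l <- L].
  by elim: L => [|l L ih] //=; rewrite ih eqSS.
elim: s dir prev cur i => [|x s ih] dir prev cur i /=.
  by case: i => [|[]] //=; rewrite cats0.
case: ifP => hc /=.
  by rewrite ih; case: i => [|i] //=; rewrite cat_rcons.
case: i => [|i] /=; first by rewrite mask_succ0 cats0.
by rewrite ih map_eq_succ; case: i.
Qed.

Lemma covers_run_labels dir prev s i x0 : i < size s ->
  covers (nth x0 (prev :: s) i) (nth x0 s i) =
  dir (+) odd (nth 0 (run_labels dir prev s) i).
Proof.
elim: s dir prev i => [|x s ih] dir prev i //=.
case: ifP => hc; case: i => [|i] /= hi.
- by rewrite addbF; apply/eqP.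
- exact: ih.
- by rewrite addbT; move: hc; case: (covers prev x); case: dir.
- rewrite (ih (covers prev x)) // (nth_map 0) ?size_run_labels //=.
  by move: (odd _) hc => o; case: (covers prev x); case: dir; case: o.
Qed.

Lemma run_labels_step dir prev s i : i.+1 < size s ->
  nth 0 (run_labels dir prev s) i <= nth 0 (run_labels dir prev s) i.+1.
Proof.
elim: s dir prev i => [|x s ih] dir prev i //=.
case: ifP => hc; case: i => [|i] /= hi //.
- by rewrite ih.
- by rewrite (nth_map 0) ?size_run_labels //; case: (s) hi.
- by rewrite !(nth_map 0) ?size_run_labels ?ltnS ?ih //; lia.
Qed.

Lemma sorted_nth_runs dir (prev : P) s cur : cur != [::] -> last prev cur = prev ->
  sorted (fun x y : P => covers x y == dir) cur ->
  forall i, sorted (fun x y : P => covers x y == dir (+) odd i)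
                   (nth [::] (runs dir prev s cur) i).
Proof.
elim: s dir prev cur => [|x s ih] dir prev cur hne hl hs i /=.
  by case: i => [|[]] //=; rewrite addbF.
case: ifP => hc.
  apply: ih; [by case: (cur) | by rewrite last_rcons |].
  case: cur hne hl hs => [//|c0 c'] _ /= hl hs.
  by rewrite rcons_path hs /= hl hc.
case: i => [|i] /=; first by rewrite addbF.
apply: sub_sorted (ih (covers prev x) x [:: x] isT erefl isT i) => y z /=.
clear -hc; move: (covers y z) => cyz.
by move: hc; case: (covers prev x); case: dir; case: (odd i).
Qed.

End RunLabels.

(** * Paths satisfying the star condition *)

Section StarPath.
Variables (d : Order.disp_t) (P : finPOrderType d) (q1 : P) (rest : seq P).
Hypothesis zigzag : path (fun x y => covers x y || covers y x) q1 rest.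
Hypothesis ends_up : last true (pairmap (@covers d P) q1 rest).
Hypothesis star : star_cond (q1 :: rest).

Local Notation C := (q1 :: rest).
Local Notation t := (size rest).+1.
Local Notation lab := (0 :: run_labels true q1 rest).
Local Notation c p := (nth q1 C p).
Local Notation l p := (nth 0 lab p).

Lemma size_lab : size lab = t.
Proof. by rewrite /= size_run_labels. Qed.

Lemma nth_blocks i : nth [::] (blocks C) i = mask [seq x == i | x <- lab] C.
Proof. by rewrite /blocks nth_runs; case: i. Qed.

Lemma covers_stepE p : p.+1 < t -> covers (c p) (c p.+1) = ~~ odd (l p.+1).
Proof. by move=> hp; rewrite /= (covers_run_labels true) // addTb. Qed.

Lemma covers_step p : p.+1 < t -> covers (c p) (c p.+1) || covers (c p.+1) (c p).
Proof. by move=> hp; move/pathP: zigzag => /(_ q1 p hp). Qed.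

Lemma lab_homo i j : i <= j -> j < t -> l i <= l j.
Proof.
elim: j => [|j ih]; first by rewrite leqn0 => /eqP->.
rewrite leq_eqVlt => /orP[/eqP->//|hij] hj.
apply: leq_trans (ih hij (ltnW hj)) _.
by case: j {ih hij} hj => [//|j] hj; apply: run_labels_step.
Qed.

Lemma mem_nth_blocks p : p < t -> c p \in nth [::] (blocks C) (l p).
Proof.
move=> hp; rewrite nth_blocks; apply: mem_mask_nth => //.
  by rewrite size_map size_lab.
by rewrite (nth_map 0) ?size_lab.
Qed.

Lemma lab_lt_size_blocks p : p < t -> l p < size (blocks C).
Proof.
move=> hp; have := mem_nth_blocks hp; rewrite ltnNge; apply: contraL => h.
by rewrite (nth_default [::] h).
Qed.

Lemma sorted_blockA m : sorted (@covers d P) (blockA C m).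
Proof.
have := @sorted_nth_runs d P true q1 rest [:: q1] isT erefl isT m.*2.
by rewrite odd_double addbF; apply: sub_sorted => x y /= /eqP.
Qed.

Lemma odd_last_lab : ~~ odd (l (size rest)).
Proof.
have [->|ne] := eqVneq rest [::]; first by [].
have hn : (size rest).-1.+1 = size rest by rewrite prednK // lt0n size_eq0.
have hs : (size rest).-1.+1 < t by rewrite hn.
have := ends_up; rewrite -nth_last size_pairmap (nth_pairmap q1) ?hn //.
by rewrite -hn -(covers_stepE hs).
Qed.

Lemma len_star_lab : len_star C = count (fun x => ~~ odd x) (behead lab).
Proof.
rewrite /len_star; suff -> : pairmap (@covers d P) q1 rest = map (fun x => ~~ odd x) (behead lab).
  by rewrite count_map.
apply: (@eq_from_nth _ true); first by rewrite size_pairmap size_map size_run_labels.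
move=> i; rewrite size_pairmap => hi.
by rewrite (nth_pairmap q1) // (nth_map 0) ?size_run_labels // (covers_run_labels true) // addTb.
Qed.

Lemma lt_up_steps i j : i < j -> j < t -> (forall r, i < r <= j -> ~~ odd (l r)) ->
  (c i < c j)%O.
Proof.
elim: j => [//|j ih] hij hjt hr.
have st : (c j < c j.+1)%O.
  by apply: covers_lt; rewrite covers_stepE //; apply: hr; rewrite hij leqnn.
move: hij; rewrite ltnS leq_eqVlt => /orP[/eqP->//|hij].
apply: lt_trans st; apply: ih => //; first exact: ltnW.
by move=> r /andP[h1 h2]; apply: hr; rewrite h1 ltnW.
Qed.

Lemma star_index m : m.*2.+1 <= l (size rest) -> m < (nA C).-1.
Proof.
have := lab_lt_size_blocks (ltnSn (size rest)).
rewrite /nA -{1 2}(odd_double_half (l (size rest))) (negbTE odd_last_lab) add0n.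
by rewrite -!muln2; lia.
Qed.

Lemma star_blockD m p : p < t -> l p = m.*2.+1 ->
  c p \notin (\bigcup_(m' < m) genA q1 (blockA C m')) :|: genA_minus_t (blockA C m).
Proof.
move=> hp hl.
have hm : m < (nA C).-1 by apply: star_index; rewrite -hl lab_homo.
move: star => /forallP/(_ (Ordinal hm)) /andP[/eqP hD _].
apply/negP => hx; suff : c p \in set0 by rewrite inE.
by rewrite -hD in_setI in_setU hx inE /blockD -hl mem_nth_blocks.
Qed.

Lemma star_blockA h p : p < t -> l p = h.+1.*2 ->
  c p \notin (\bigcup_(m' < h) genA q1 (blockA C m')) :|: genA q1 (blockA C h).
Proof.
move=> hp hl.
have hh : h < (nA C).-1.
  by apply: star_index; have := @lab_homo p (size rest) hp (ltnSn _); rewrite hl doubleS => /ltnW.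
move: star => /forallP/(_ (Ordinal hh)) /andP[_ /eqP hA].
apply/negP => hx; suff : c p \in set0 by rewrite inE.
by rewrite -hA in_setI hx inE /blockA -hl mem_nth_blocks.
Qed.

Lemma lt_flat_run i j : i < j -> j < t -> l j = l i -> ~~ odd (l i) -> (c i < c j)%O.
Proof.
move=> hij hjt hji hi; apply: lt_up_steps => // r /andP[hir hrj].
have hrt : r < t := leq_ltn_trans hrj hjt.
have : l i <= l r <= l j by rewrite !lab_homo // ltnW.
by rewrite hji -eqn_leq => /eqP <-.
Qed.

Lemma lab_return i j : i < j -> j < t -> ~~ odd (l i) -> (c j <= c i)%O ->
  l j = (l i).+1.
Proof.
move=> hij hjt hi hji.
have hit : i < t := ltn_trans hij hjt.
have him := odd_double_half (l i); rewrite (negbTE hi) add0n in him.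
have hlj := odd_double_half (l j).
set m := (l i)./2 in him *; set h := (l j)./2 in hlj.
have lij : l i <= l j := lab_homo (ltnW hij) hjt.
have [eq_lab|ne_lab] := eqVneq (l j) (l i).
  by have := lt_le_trans (lt_flat_run hij hjt eq_lab hi) hji; rewrite ltxx.
have [//|ne1] := eqVneq (l j) (l i).+1; exfalso.
have big : (l i).+2 <= l j by rewrite ltn_neqAle eq_sym ne1 ltn_neqAle eq_sym ne_lab.
have cjA : c j \in genA q1 (blockA C m).
  rewrite inE /tB; apply: le_trans hji (sorted_covers_le_last q1 (sorted_blockA m) _).
  by rewrite /blockA him mem_nth_blocks.
case: (boolP (odd (l j))) => oj.
  rewrite oj add1n in hlj.
  have mh : m < h by rewrite -!muln2 in him hlj; lia.
  apply: (negP (star_blockD hjt (esym hlj))).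
  by rewrite in_setU; apply/orP; left; apply/bigcupP; exists (Ordinal mh).
rewrite (negbTE oj) add0n in hlj.
have hh : h = h.-1.+1 by rewrite -!muln2 in him hlj; lia.
have mh : m <= h.-1 by rewrite -!muln2 in him hlj; lia.
apply: (negP (star_blockA hjt (_ : l j = h.-1.+1.*2))); first by rewrite -hh hlj.
rewrite in_setU; move: mh; rewrite leq_eqVlt => /orP[/eqP <-|mh].
  by rewrite cjA orbT.
by apply/orP; left; apply/bigcupP; exists (Ordinal mh).
Qed.

Lemma odd_lab_return i j : i < j -> j < t -> ~~ odd (l i) -> (c j <= c i)%O ->
  forall r, i < r <= j -> odd (l r).
Proof.
move=> hij hjt hi hji r /andP[hir hrj]; apply/negPn/negP => hr.
have hrt : r < t := leq_ltn_trans hrj hjt.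
have hlj := lab_return hij hjt hi hji.
have hri : l r = l i.
  have : l i <= l r <= (l i).+1 by rewrite -hlj !lab_homo // ltnW.
  case/andP => h1; rewrite leq_eqVlt => /orP[/eqP e|]; last first.
    by rewrite ltnS => h2; apply/eqP; rewrite eqn_leq h1 h2.
  by move: hr; rewrite e /= hi.
have him := odd_double_half (l i); rewrite (negbTE hi) add0n in him.
set m := (l i)./2 in him.
have cir := lt_flat_run hir hrt hri hi.
have inA p : p < t -> l p = l i -> c p \in blockA C m.
  by move=> hp hp'; rewrite /blockA him -hp' mem_nth_blocks.
have ci_last : c i != tB q1 (blockA C m).
  apply/eqP => e; have := sorted_covers_le_last q1 (sorted_blockA m) (inA r hrt hri).
  by rewrite -/(tB _ _) -e => /(lt_le_trans cir); rewrite ltxx.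
apply: (negP (star_blockD hjt (_ : l j = m.*2.+1))); first by rewrite hlj him.
rewrite in_setU inE; apply/orP; right; apply/hasP.
exists (c i) => //; apply: mem_take_predsize ci_last.
exact: inA (ltn_trans hij hjt) erefl.
Qed.

(* [level r] is one plus the number of up-steps among the first [r] steps. *)
Definition level r := count (fun x => ~~ odd x) (take r.+1 lab).

Lemma level0 : level 0 = 1.
Proof. by rewrite /level /= take0. Qed.

Lemma levelS r : r.+1 < t -> level r.+1 = level r + ~~ odd (l r.+1).
Proof. by move=> hr; rewrite /level (take_nth 0) ?size_lab // -cats1 count_cat /= addn0. Qed.

Lemma level_homo i j : i <= j -> j < t -> level i <= level j.
Proof.
elim: j => [|j ih]; first by rewrite leqn0 => /eqP->.
rewrite leq_eqVlt => /orP[/eqP->//|hij] hj.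
by rewrite levelS //; apply: leq_trans (ih hij (ltnW hj)) (leq_addr _ _).
Qed.

Lemma level_last : level (size rest) = (len_star C).+1.
Proof. by rewrite /level take_oversize ?size_lab // len_star_lab /= add1n. Qed.

Lemma level_return i j : i < j -> j < t -> ~~ odd (l i) -> (c j <= c i)%O ->
  level j = level i.
Proof.
move=> hij hjt hi hji; have down := odd_lab_return hij hjt hi hji.
suff h r : i <= r <= j -> level r = level i by rewrite h // ltnW /=.
elim: r => [|r ih]; first by rewrite leqn0 => /andP[/eqP->].
case/andP; rewrite leq_eqVlt => /orP[/eqP <- //|h1] h2.
have hrt : r.+1 < t := leq_ltn_trans h2 hjt.
by rewrite levelS // down ?h1 // addn0 ih // -ltnS h1 ltnW.
Qed.

Definition level_below (y : P) := \max_(r < t | (c r <= y)%O) level r.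

Lemma level_below_le y : level_below y <= (len_star C).+1.
Proof. by apply/bigmax_leqP => r _; rewrite -level_last level_homo // -ltnS. Qed.

Lemma level_below_ge r y : r < t -> (c r <= y)%O -> level r <= level_below y.
Proof. by move=> hr hy; apply: (@leq_bigmax_cond _ _ _ (Ordinal hr)). Qed.

Lemma level_below_homo y y' : (y <= y')%O -> level_below y <= level_below y'.
Proof.
by move=> h; apply/bigmax_leqP => r hr; apply: level_below_ge => //; apply: le_trans h.
Qed.

Lemma level_below_A r : r < t -> ~~ odd (l r) -> level_below (c r) = level r.
Proof.
move=> hr ho; apply/eqP; rewrite eqn_leq level_below_ge // andbT.
apply/bigmax_leqP => r' hr'.
by have [h|h] := leqP r' r; [rewrite level_homo | rewrite (level_return h)].
Qed.

Section Weight.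
Variable Q : nat.

(* The exponent of [X_y] in the witness monomial. *)
Definition weight (y : P) := Q * (len_star C).+2 - Q * level_below y.

Lemma weight_le y : weight y <= Q * (len_star C).+2.
Proof. exact: leq_subr. Qed.

Lemma weight_anti x y : (y <= x)%O -> weight x <= weight y.
Proof. by move=> h; rewrite leq_sub2l // leq_mul2l level_below_homo ?orbT. Qed.

Lemma weight_first : weight (c 0) = Q * (len_star C).+1.
Proof. by rewrite /weight level_below_A // level0 muln1 mulnS addnC addnK. Qed.

Lemma weight_last : weight (c (size rest)) = Q.
Proof.
by rewrite /weight level_below_A ?odd_last_lab // level_last mulnS addnK.
Qed.

Lemma weight_up p : p.+1 < t -> covers (c p) (c p.+1) ->
  weight (c p) <= weight (c p.+1) + Q.
Proof.
rewrite /weight => hp up; rewrite covers_stepE // in up.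
rewrite (@level_below_A p.+1) // levelS // up addn1.
have := level_below_le (c p.+1); rewrite (@level_below_A p.+1) // levelS // up addn1.
have : level p <= level_below (c p) by rewrite level_below_ge // ltnW.
move: (level p) (level_below _) => x y hxy hx.
have : Q * x <= Q * y by rewrite leq_mul2l hxy orbT.
have : Q * x.+1 <= Q * (len_star C).+2 by rewrite leq_mul2l (leqW hx) orbT.
by rewrite !mulnS; lia.
Qed.

End Weight.

End StarPath.

Lemma exists_crossing (f : nat -> bool) n :
  f 0 -> ~~ f n -> exists2 i, i < n & f i && ~~ f i.+1.
Proof.
elim: n => [->//|n ih] h0 hn.
have [hfn|hfn] := boolP (f n); first by exists n; rewrite ?hfn.
by have [i hi hh] := ih h0 hfn; exists i => //; apply: ltnW.
Qed.

(** * Monomials of the Hibi ring and of its Frobenius powers *)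

Section HibiMonomials.
Variables (k : fieldType) (d : Order.disp_t) (P : finPOrderType d).
Local Notation Poly := (Defs.Poly k P).
Local Notation mnm := 'X_{1..nvars P}.

Definition idxT : 'I_(nvars P) := ord0.
Definition idxX (x : P) : 'I_(nvars P) := lift ord0 (enum_rank x).

Lemma idxX_neqT x : (idxX x == idxT) = false.
Proof. by apply/negbTE; rewrite eq_sym neq_lift. Qed.

Lemma eq_idxX x y : (idxX y == idxX x) = (y == x).
Proof. by apply/eqP/eqP => [/lift_inj/enum_rank_inj|->]. Qed.

Definition gen_mnm (I : {set P}) : mnm := (U_(idxT) + \sum_(x in I) U_(idxX x))%MM.

Lemma gen_mnmT I : gen_mnm I idxT = 1.
Proof.
rewrite mnmDE mnm_sumE mnm1E eqxx big1 // => x _.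
by rewrite mnm1E idxX_neqT.
Qed.

Lemma gen_mnmX I x : gen_mnm I (idxX x) = (x \in I).
Proof.
rewrite mnmDE mnm_sumE mnm1E (eq_sym idxT) idxX_neqT add0n.
have [xI|xI] := boolP (x \in I).
  rewrite (bigD1 x) //= mnm1E eqxx big1 // => y /andP[_ yx].
  by rewrite mnm1E eq_idxX (negbTE yx).
rewrite big1 // => y yI; rewrite mnm1E eq_idxX.
by case: eqP yI => // ->; rewrite (negbTE xI).
Qed.

Lemma hibi_genE I : hibi_gen k I = 'X_[gen_mnm I].
Proof.
rewrite /hibi_gen /varT /varX mpolyXD; congr (_ * _)%R.
by rewrite (big_morph (fun m : mnm => 'X_[m] : Poly) (@mpolyXD _ _) (@mpolyX0 _ _)).
Qed.

Definition hibi_mnm (m : mnm) : Prop :=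
  (forall x, m (idxX x) <= m idxT) /\
  (forall x y, (y <= x)%O -> m (idxX x) <= m (idxX y)).

Lemma hibi_mnm0 : hibi_mnm 0%MM.
Proof. by split=> *; rewrite !mnm0E. Qed.

Lemma hibi_mnmD m1 m2 : hibi_mnm m1 -> hibi_mnm m2 -> hibi_mnm (m1 + m2)%MM.
Proof.
move=> [h1 h2] [h3 h4]; split=> [x|x y yx]; rewrite !mnmDE; first exact: leq_add.
by rewrite leq_add ?h2 ?h4.
Qed.

Lemma hibi_mnm_gen I : poset_ideal I -> hibi_mnm (gen_mnm I).
Proof.
move=> hI; split=> [x|x y yx]; rewrite !gen_mnmX ?gen_mnmT; first by case: (x \in I).
by case xI: (x \in I) => //; rewrite (hI x y yx xI).
Qed.

Definition hibi_supp (f : Poly) : Prop := forall m, m \in msupp f -> hibi_mnm m.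

Lemma inHibi_supp f : inHibi f -> hibi_supp f.
Proof.
elim=> [c|I hI|f1 g _ hf _ hg|f1 g _ hf _ hg] m.
- by rewrite msuppC; case: (c == 0)%R => //; rewrite mem_seq1 => /eqP ->; apply: hibi_mnm0.
- by rewrite hibi_genE msuppX mem_seq1 => /eqP ->; apply: hibi_mnm_gen.
- by move/msuppD_le; rewrite mem_cat => /orP[/hf|/hg].
- move/msuppM_le => /allpairsP[[m1 m2] [/= /hf h1 /hg h2 ->]].
  exact: hibi_mnmD.
Qed.

Definition frob_mnm (q : nat) (m : mnm) : Prop :=
  exists2 I, poset_ideal I &
    exists2 m', hibi_mnm m' & m = (gen_mnm I *+ q + m')%MM.

Definition frob_supp (q : nat) (f : Poly) : Prop :=
  forall m, m \in msupp f -> frob_mnm q m.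

Lemma frob_supp0 q : frob_supp q 0%R.
Proof. by move=> m; rewrite msupp0. Qed.

Lemma frob_suppD q f g : frob_supp q f -> frob_supp q g -> frob_supp q (f + g)%R.
Proof. by move=> hf hg m /msuppD_le; rewrite mem_cat => /orP[/hf|/hg]. Qed.

Lemma frob_suppM q r f : hibi_supp r -> frob_supp q f -> frob_supp q (r * f)%R.
Proof.
move=> hr hf m /msuppM_le /allpairsP[[m1 m2] [/= /hr h1 /hf [I hI [m' hm' ->]] ->]].
exists I => //; exists (m1 + m')%MM; first exact: hibi_mnmD.
by apply/mnmP => i; rewrite !mnmDE addnCA.
Qed.

Lemma inHibi1 : inHibi (1%R : Poly).
Proof. by have := @Hibi_const k d P 1%R; rewrite mpolyC1. Qed.

Lemma inHibiX (r : Poly) i : inHibi r -> inHibi (r ^+ i)%R.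
Proof.
move=> hr; elim: i => [|i ih]; first by rewrite expr0; apply: inHibi1.
by rewrite exprS; apply: Hibi_mul.
Qed.

Section Frobenius.
Variables (p e : nat).
Hypothesis hp : p \in [pchar k]%R.

Lemma pnat_pchar_Poly : [pchar Poly]%R.-nat (p ^ e).
Proof.
by rewrite pnatX (pnatE _ (pcharf_prime hp)) (pchar_lalg Poly) hp.
Qed.

Lemma frob_supp_pow x : max_ideal x -> frob_supp (p ^ e) (x ^+ (p ^ e)%N)%R.
Proof.
have q0 : 0 < p ^ e by rewrite expn_gt0 prime_gt0 // (pcharf_prime hp).
elim=> [|g [I [hI ->]]|f g _ hf _ hg|r f hr _ hf].
- by rewrite expr0n gtn_eqF //; apply: frob_supp0.
- rewrite hibi_genE mpolyXn => m; rewrite msuppX mem_seq1 => /eqP ->.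
  by exists I => //; exists 0%MM; rewrite ?addm0 //; apply: hibi_mnm0.
- by rewrite exprDn_pchar ?pnat_pchar_Poly //; apply: frob_suppD.
- by rewrite exprMn; apply: frob_suppM => //; apply/inHibi_supp/inHibiX.
Qed.

Lemma frob_pow_supp f : frob_pow (p ^ e) f -> frob_supp (p ^ e) f.
Proof.
elim=> [|g [x [hx ->]]|f1 f2 _ h1 _ h2|r f1 hr _ h1].
- exact: frob_supp0.
- exact: frob_supp_pow.
- exact: frob_suppD.
- by apply: frob_suppM => //; apply: inHibi_supp.
Qed.

End Frobenius.

Lemma not_frob_mnm_zigzag q (m : mnm) (c : nat -> P) n :
  (forall i, i < n -> (c i <= c i.+1)%O || (c i.+1 <= c i)%O) ->
  (forall i, i < n -> (c i <= c i.+1)%O -> m (idxX (c i)) < m (idxX (c i.+1)) + q) ->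
  m idxT < m (idxX (c 0)) + q -> m (idxX (c n)) < q -> ~ frob_mnm q m.
Proof.
move=> comparable up first last [I hI [m' [m'T m'anti] em]].
have mE j : m j = (gen_mnm I j * q + m' j)%N by rewrite em mnmDE mulmnE.
have mX x : m (idxX x) = ((x \in I) * q + m' (idxX x))%N by rewrite mE gen_mnmX.
have c0I : c 0 \in I.
  apply: contraLR first => c0I; rewrite -leqNgt mX (negbTE c0I) mE gen_mnmT.
  by rewrite mul0n add0n mul1n addnC leq_add2l m'T.
have cnI : c n \notin I by apply: contraTN last => cnI; rewrite -leqNgt mX cnI mul1n leq_addr.
have [i hi /andP[ciI ci1I]] := @exists_crossing (fun i => c i \in I) n c0I cnI.
have /orP[le|le] := comparable i hi; last by rewrite (hI _ _ le ciI) in ci1I.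
have := up i hi le; rewrite !mX ciI (negbTE ci1I) mul1n mul0n add0n addnC ltn_add2r.
by rewrite ltnNge (m'anti _ _ le).
Qed.

Section Staircase.
Variables (b : P -> nat) (a : nat).

Definition level_ideal (j : nat) : {set P} := [set x | j < b x].

Lemma poset_ideal_level j :
  (forall x y, (y <= x)%O -> b x <= b y) -> poset_ideal (level_ideal j).
Proof. by move=> b_anti x y yx; rewrite !inE => /leq_trans; apply; apply: b_anti. Qed.

Definition staircase_mnm : mnm := \sum_(0 <= j < a) gen_mnm (level_ideal j).

Lemma staircase_mnmT : staircase_mnm idxT = a.
Proof.
rewrite mnm_sumE (eq_bigr (fun _ => 1)) => [|j _]; last exact: gen_mnmT.
by rewrite sum_nat_const_nat muln1 subn0.
Qed.

Lemma staircase_mnmX x : b x <= a -> staircase_mnm (idxX x) = b x.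
Proof.
rewrite mnm_sumE (eq_bigr (fun j => (j < b x) : nat)) => [|j _]; last first.
  by rewrite gen_mnmX inE.
move=> b_le; rewrite (@big_cat_nat _ _ _ (b x)) //=.
rewrite (@eq_big_nat _ _ _ 0 (b x) _ (fun=> 1)) => [|j /andP[_ ->]//].
rewrite (@eq_big_nat _ _ _ (b x) a _ (fun=> 0)) => [|j /andP[]]; last first.
  by move=> /leq_gtF ->.
by rewrite !sum_nat_const_nat muln1 muln0 subn0 addn0.
Qed.

Lemma max_ideal_pow_staircase : (forall x y, (y <= x)%O -> b x <= b y) ->
  max_ideal_pow a ('X_[staircase_mnm] : Poly).
Proof.
move=> b_anti; apply: Ideal_gen; exists [seq hibi_gen k (level_ideal j) | j <- index_iota 0 a]; split.
- by rewrite size_map size_iota subn0.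
- move=> f /mapP[j _ ->]; apply: Ideal_gen.
  by exists (level_ideal j); split=> //; apply: poset_ideal_level.
- rewrite big_map (big_morph (fun m : mnm => 'X_[m] : Poly) (@mpolyXD _ _) (@mpolyX0 _ _)).
  by apply: eq_bigr => j _; rewrite hibi_genE.
Qed.

End Staircase.

End HibiMonomials.

(** * The lower bound on nu *)

Lemma exists_max_nat (Q : nat -> Prop) r B :
  Q r -> (forall n, Q n -> n <= B) -> exists n, Q n /\ forall m, Q m -> m <= n.
Proof.
move=> Qr QB; pose b n : bool := excluded_middle_informative (Q n).
have bP n : reflect (Q n) (b n) := sumboolP _.
have exb : exists n, b n by exists r; apply/bP.
have bB n : b n -> n <= B by move/bP; apply: QB.
by case: (ex_maxnP exb bB) => n /bP Qn nmax; exists n; split=> // m /bP; apply: nmax.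
Qed.

Lemma size_sum_count_mem (T : finType) (s : seq T) : size s = \sum_(x : T) count_mem x s.
Proof.
elim: s => [|y s ih]; first by rewrite big1.
rewrite /= ih big_split /=; suff -> : \sum_(x : T) (y == x : nat) = 1 by [].
by rewrite (bigD1 y) //= eqxx big1 // => x /negbTE; rewrite eq_sym => ->.
Qed.

Lemma prod_count_mem (R : comPzSemiRingType) (T : eqType) (F : T -> R) (s : seq T) x :
  (\prod_(y <- s) F y = F x ^+ count_mem x s * \prod_(y <- s | y != x) F y)%R.
Proof.
elim: s => [|y s ih]; first by rewrite !big_nil expr0 mulr1.
rewrite !big_cons ih /=; have [->|nyx] := eqVneq y x; first by rewrite add1n exprS mulrA.
by rewrite add0n mulrCA.
Qed.

Section NuBound.
Variables (k : fieldType) (d : Order.disp_t) (P : finPOrderType d).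
Local Notation Poly := (Defs.Poly k P).

Definition gen_prod (r : nat) (g : Poly) : Prop :=
  exists Is : seq {set P}, [/\ size Is = r, (forall I, I \in Is -> poset_ideal I)
     & g = \prod_(I <- Is) hibi_gen k I]%R.

Lemma in_ideal_sub (S S' : Poly -> Prop) f :
  (forall g, S g -> in_ideal S' g) -> in_ideal S f -> in_ideal S' f.
Proof.
move=> hS; elim=> [|g /hS //|f1 g _ h1 _ h2|r f1 hr _ h1].
- exact: Ideal_zero.
- exact: Ideal_add.
- exact: Ideal_mul.
Qed.

Lemma max_ideal_mul_gen_prod r (f h : Poly) :
  max_ideal f -> in_ideal (gen_prod r) h -> in_ideal (gen_prod r.+1) (f * h)%R.
Proof.
move=> hf; elim: hf h => [|g [I [hI ->]]|f1 f2 _ h1 _ h2|r' f1 hr _ h1] h hh.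
- by rewrite mul0r; apply: Ideal_zero.
- elim: hh => [|g' [Is [hs hIs ->]]|u v _ hu _ hv|r'' u hr _ hu].
  + by rewrite mulr0; apply: Ideal_zero.
  + apply: Ideal_gen; exists (I :: Is); split; first by rewrite /= hs.
      by move=> J; rewrite inE => /orP[/eqP->|/hIs].
    by rewrite big_cons.
  + by rewrite mulrDr; apply: Ideal_add.
  + by rewrite mulrCA; apply: Ideal_mul.
- by rewrite mulrDl; apply: Ideal_add; [apply: h1|apply: h2].
- by rewrite -mulrA; apply: Ideal_mul => //; apply: h1.
Qed.

Lemma max_ideal_pow_gen_prod r f : max_ideal_pow r f -> in_ideal (gen_prod r) f.
Proof.
apply: in_ideal_sub => g [fs [<- hfs ->]].
elim: fs hfs => [|h fs ih] hfs.
  by rewrite big_nil; apply: Ideal_gen; exists [::]; split=> //; rewrite big_nil.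
rewrite big_cons; apply: max_ideal_mul_gen_prod; first by apply: hfs; rewrite mem_head.
by apply: ih => u hu; apply: hfs; rewrite inE hu orbT.
Qed.

Lemma inHibi_prod (Is : seq {set P}) (Q : pred {set P}) :
  (forall I, I \in Is -> poset_ideal I) -> inHibi (\prod_(J <- Is | Q J) hibi_gen k J)%R.
Proof.
move=> hI; rewrite big_seq_cond; apply: (big_ind (@inHibi k d P)).
- exact: inHibi1.
- exact: Hibi_mul.
- by move=> J /andP[/hI hJ _]; apply: Hibi_gen.
Qed.

(* Pigeonhole: a product of more than [#|{set P}| * (q - 1)] generators
   repeats some generator [q] times. *)
Lemma gen_prod_frob_pow q r g : 0 < q -> #|{set P}| * q.-1 < r ->
  gen_prod r g -> frob_pow q g.
Proof.
move=> q0 hr [Is [hs hIs ->]].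
have [I hI] : exists I, q <= count_mem I Is.
  apply/existsP; apply: contraLR hr; rewrite negb_exists => /forallP hall.
  rewrite -leqNgt -hs size_sum_count_mem -sum_nat_const; apply: leq_sum => I _.
  by rewrite -ltnS prednK // ltnNge hall.
have IIs : I \in Is by rewrite -has_pred1 has_count (leq_trans q0).
rewrite (prod_count_mem _ _ I) -(subnK hI) exprD mulrAC.
apply: Ideal_mul.
  apply: Hibi_mul; last exact: inHibi_prod.
  by apply/inHibiX/Hibi_gen/hIs.
apply: Ideal_gen; exists (hibi_gen k I); split=> //.
by apply: Ideal_gen; exists I; split=> //; apply: hIs.
Qed.

Lemma nu_pred_le q r : 0 < q -> nu_pred k P q r -> r <= #|{set P}| * q.-1.
Proof.
move=> q0 hr; rewrite leqNgt; apply/negP => big; apply: hr => f.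
move/max_ideal_pow_gen_prod; apply: in_ideal_sub => g.
exact: gen_prod_frob_pow.
Qed.

Lemma nu_ge q r : 0 < q -> nu_pred k P q r -> r <= nu k P q.
Proof.
move=> q0 hr; have [n hn] := exists_max_nat hr (fun n => nu_pred_le q0).
have [_ max] := epsilon_spec (inhabits 0) (fun n =>
  nu_pred k P q n /\ forall m, nu_pred k P q m -> m <= n) (ex_intro _ n hn).
exact: max.
Qed.

End NuBound.

Lemma nu_ge_star_path (k : fieldType) (p e : nat) (hp : p \in [pchar k]%R)
  (d : Order.disp_t) (P : finPOrderType d) (q1 : P) (rest : seq P) :
  path (fun x y => covers x y || covers y x) q1 rest ->
  last true (pairmap (@covers d P) q1 rest) -> star_cond (q1 :: rest) ->
  (p ^ e).-1 * (len_star (q1 :: rest)).+2 <= nu k P (p ^ e).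
Proof.
move=> zz ends_up st; set q := p ^ e; set Q := q.-1.
have q0 : 0 < q by rewrite expn_gt0 prime_gt0 // (pcharf_prime hp).
have Qq : Q < q by rewrite prednK.
apply: nu_ge => // sub.
set m := staircase_mnm (weight q1 rest Q) (Q * (len_star (q1 :: rest)).+2).
have := sub _ (max_ideal_pow_staircase k _ (@weight_anti _ _ q1 rest Q)).
move=> /(frob_pow_supp hp)/(_ m); rewrite msuppX mem_seq1 eqxx => /(_ isT).
set c := fun i => nth q1 (q1 :: rest) i.
have mX x : m (idxX x) = weight q1 rest Q x := staircase_mnmX (weight_le q1 rest Q x).
apply: (not_frob_mnm_zigzag (c := c) (n := size rest)).
- by move=> i hi; case/orP: (covers_step zz hi) => /covers_lt/ltW ->; rewrite ?orbT.
- move=> i hi le; rewrite !mX; case/orP: (covers_step zz hi) => cv.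
    by apply: leq_ltn_trans (weight_up zz ends_up st Q hi cv) _; rewrite ltn_add2l.
  by have := lt_le_trans (covers_lt cv) le; rewrite ltxx.
- by rewrite staircase_mnmT mX (weight_first zz ends_up st) mulnS addnC ltn_add2l.
- by rewrite mX (weight_last zz ends_up st).
Qed.

Lemma exists_star_path_rank (d : Order.disp_t) (P : finPOrderType d) :
  0 < #|P| -> exists q1 (rest : seq P),
  [/\ path (fun x y => covers x y || covers y x) q1 rest,
      last true (pairmap (@covers d P) q1 rest),
      star_cond (q1 :: rest) & len_star (q1 :: rest) = rank_star P].
Proof.
case/card_gt0P => x0 _.
pose K n := exists q1 (rest : seq P),
  [/\ path (fun x y => covers x y || covers y x) q1 rest,
      last true (pairmap (@covers d P) q1 rest),
      star_cond (q1 :: rest) & len_star (q1 :: rest) = n].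
have K0 : K 0 by exists x0, [::]; split=> //; apply/forallP => -[].
have Kmax x y : K x -> K y -> K (maxn x y) by case: (leqP x y).
apply: (big_ind K) => // n _; apply: (big_ind K) => // s /andP[].
case: s => -[|q1 rest] //= _ /andP[/and4P[_ _ zz ends_up] _] st.
by exists q1, rest.
Qed.

Lemma liminf_ge_pred_pow (a : nat -> nat) (p c : nat) : 1 < p ->
  (forall e, (p ^ e).-1 * c <= a e) ->
  liminf_ge (fun e => ((a e)%:R / (p ^ e)%:R)%R) c%:R.
Proof.
move=> p1 ha eps eps0.
have c0 : (0 <= c%:R / eps :> rat)%R by rewrite divr_ge0 // ltW.
exists (Num.Def.archi_bound (c%:R / eps)) => e hE; set q := p ^ e.
have q0 : 0 < q by rewrite expn_gt0 ltnW.
have qr : (0 < q%:R :> rat)%R by rewrite ltr0n.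
have c_lt : (c%:R < eps * q%:R :> rat)%R.
  rewrite mulrC -ltr_pdivrMr //; apply: lt_le_trans (archi_boundP c0) _.
  by rewrite ler_nat (leq_trans hE) // ltnW // ltn_expl.
have := ha e; rewrite -/q -(ler_nat rat) natrM -subn1 natrB //.
rewrite ler_pdivlMr // => h.
lra.
Qed.

Theorem lemma2p5 (k : fieldType) (p : nat) (hp : p \in [pchar k]%R)
  (d : Order.disp_t) (P : finPOrderType d) (hP : (0 < #|P|)%N) :
  liminf_ge (fun e => ((nu k P (p ^ e))%:R / (p ^ e)%:R)%R)
            ((rank_star P + 2)%:R)%R.
Proof.
have [q1 [rest [zz ends_up st <-]]] := exists_star_path_rank hP.
rewrite addn2; apply: liminf_ge_pred_pow (prime_gt1 (pcharf_prime hp)) _ => e.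
exact: nu_ge_star_path.
Qed.
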